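(* Consider the network game with symmetric adjacency matrix $A\in\{0,1\}^{n\times n}$, parameter $\beta>0$ with $\beta\lambda_1(A)<1$, and standalone value vector $b\in\mathbb{R}^n_{\ge0}$. Let $C>\max(\|b\|^2,1)$ and let $y^*$ be an optimal intervention of budget $C$. Let $\gamma\in[-1,1]$. Then for every $y\in\mathbb{R}^n$ with $\|y\|^2=C$ and $\rho(y,y^* )>\gamma$, the competitive ratio satisfies $$\frac{W(y)}{W(y^* )}\ge 1-4\sqrt{2(1-\gamma)}.$$
   Context: Network game: agents $1,\dots,n$ on an undirected graph with symmetric adjacency matrix $A$; agent $i$ chooses $a_i\in\mathbb{R}$ and has utility $u_i(a)=b_ia_i-\tfrac12a_i^2+\beta\sum_jA_{ij}a_ia_j$. Let $M=I-\beta A$. When the spectral radius of $\beta A$ is below $1$, the unique Nash equilibrium is $a^*=M^{-1}b$ and the social welfare at equilibrium is $\tfrac12(a^* )^\top a^*$. An intervention is a vector $y$ replacing $b$ by $b+y$ at cost $\|y\|^2$; $W(y)=\tfrac12\|M^{-1}(b+y)\|^2$ is the equilibrium welfare after intervention $y$. The optimal intervention of budget $C$ is $y^*\in\arg\max_{\|x\|=\sqrt C}W(x)$, and the competitive ratio of $y$ is $W(y)/W(y^* )$. $\lambda_1(A)$ is the largest eigenvalue of $A$. The cosine similarity of nonzero vectors is $\rho(z,y)=\frac{z\cdot y}{\|z\|\|y\|}$. $\|\cdot\|$ is the Euclidean norm. *)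

From HB Require Import structures.
From mathcomp Require Import all_boot all_order all_algebra.
From mathcomp Require Import all_classical all_reals.
Set Implicit Arguments. Unset Strict Implicit. Unset Printing Implicit Defensive.
Import Order.TTheory GRing.Theory Num.Theory.
Local Open Scope ring_scope.

Definition dotv (R : realType) (n : nat) (u v : 'cV[R]_n) : R :=
  \sum_(i < n) u i 0 * v i 0.

Definition normv (R : realType) (n : nat) (v : 'cV[R]_n) : R :=
  Num.sqrt (dotv v v).

Definition cosine_sim (R : realType) (n : nat) (z y : 'cV[R]_n) : R :=
  dotv z y / (normv z * normv y).

Definition adjacency01 (R : realType) (n : nat) (A : 'M[R]_n) : Prop :=
  A^T = A /\ forall i j, A i j = 0 \/ A i j = 1.

Definition is_lambda1 (R : realType) (n : nat) (A : 'M[R]_n) (l : R) : Prop :=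
  eigenvalue A l /\ forall m, eigenvalue A m -> m <= l.

Definition Mmat (R : realType) (n : nat) (beta : R) (A : 'M[R]_n) : 'M[R]_n :=
  1%:M - beta *: A.

Definition welfare (R : realType) (n : nat) (beta : R) (A : 'M[R]_n)
    (b y : 'cV[R]_n) : R :=
  let a := invmx (Mmat beta A) *m (b + y) in (normv a) ^+ 2 / 2.

Definition optimal_intervention (R : realType) (n : nat) (beta : R)
    (A : 'M[R]_n) (b : 'cV[R]_n) (C : R) (ys : 'cV[R]_n) : Prop :=
  (normv ys) ^+ 2 = C /\
  forall x : 'cV[R]_n, (normv x) ^+ 2 = C -> welfare beta A b x <= welfare beta A b ys.

From HB Require Import structures.
From mathcomp Require Import all_boot all_order all_algebra.
From mathcomp Require Import all_classical all_reals.
From mathcomp Require Import ring lra.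
Set Implicit Arguments. Unset Strict Implicit. Unset Printing Implicit Defensive.
Import Order.TTheory GRing.Theory Num.Theory.
Local Open Scope ring_scope.

(* Write B = M^-1 (invertible because beta * lambda_1 < 1),
   p = B (b + ys) and q = B (y - ys), so that 2 W(ys) = |p|^2 and
   2 W(y) = |p + q|^2.
   1. Optimality of ys on the sphere |x|^2 = C gives, for every direction d,
      C |B d|^2 <= |p|^2 |d|^2: test x = s d with s = +-sqrt(C/|d|^2), the
      sign chosen so that the cross term <B b, B (s d)> is nonnegative.
   2. Two vectors on the sphere with cosine similarity above gamma satisfy
      |y - ys|^2 <= 2 C (1 - gamma); hence |q| <= t |p|, t = sqrt(2(1-gamma)).
   3. Cauchy-Schwarz gives |p + q|^2 >= (1 - 2t) |p|^2 >= (1 - 4t) |p|^2.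
   The file first develops the inner product dotv (bilinearity,
   Cauchy-Schwarz), then the invertibility of M, the optimality bound 1,
   the sphere estimate 2, and finally assembles the theorem. *)

Section InnerProduct.
Variables (R : realType) (n : nat).
Implicit Types u v w : 'cV[R]_n.

Lemma dotvC u v : dotv u v = dotv v u.
Proof. by rewrite /dotv; apply: eq_bigr => i _; rewrite mulrC. Qed.

Lemma dotvDl u v w : dotv (u + v) w = dotv u w + dotv v w.
Proof. by rewrite /dotv -big_split; apply: eq_bigr => i _; rewrite mxE mulrDl. Qed.

Lemma dotvDr u v w : dotv w (u + v) = dotv w u + dotv w v.
Proof. by rewrite dotvC dotvDl !(dotvC w). Qed.

Lemma dotvZl (k : R) u v : dotv (k *: u) v = k * dotv u v.
Proof. by rewrite /dotv mulr_sumr; apply: eq_bigr => i _; rewrite mxE mulrA. Qed.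

Lemma dotvZr (k : R) u v : dotv v (k *: u) = k * dotv v u.
Proof. by rewrite dotvC dotvZl dotvC. Qed.

Lemma dotvNl u v : dotv (- u) v = - dotv u v.
Proof. by rewrite -scaleN1r dotvZl mulN1r. Qed.

Lemma dotvNr u v : dotv v (- u) = - dotv v u.
Proof. by rewrite dotvC dotvNl dotvC. Qed.

Lemma dotv0r u : dotv u 0 = 0.
Proof. by rewrite /dotv big1 // => i _; rewrite mxE mulr0. Qed.

Lemma dotv_ge0 u : 0 <= dotv u u.
Proof. by apply: sumr_ge0 => i _; rewrite -expr2 sqr_ge0. Qed.

Lemma dotv_eq0 u : (dotv u u == 0) = (u == 0).
Proof.
apply/idP/eqP => [|->]; last by rewrite dotv0r.
rewrite psumr_eq0 => [/allP u0|i _]; last by rewrite -expr2 sqr_ge0.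
apply/matrixP => i j; rewrite ord1 mxE.
by have /= := u0 i (mem_index_enum _); rewrite -expr2 sqrf_eq0 => /eqP.
Qed.

Lemma normv_sqr u : normv u ^+ 2 = dotv u u.
Proof. by rewrite /normv sqr_sqrtr // dotv_ge0. Qed.

(* Cauchy-Schwarz, via the nonnegativity of |u - k v|^2 for k = <u,v>/|v|^2. *)
Lemma dotv_CauchySchwarz u v : dotv u v ^+ 2 <= dotv u u * dotv v v.
Proof.
have [/eqP|v_neq0] := eqVneq (dotv v v) 0.
  by rewrite dotv_eq0 => /eqP->; rewrite !dotv0r expr0n mulr0.
have v_gt0 : 0 < dotv v v by rewrite lt_def v_neq0 dotv_ge0.
have := dotv_ge0 (u - (dotv u v / dotv v v) *: v).
rewrite !(dotvDl, dotvDr, dotvNl, dotvNr, dotvZl, dotvZr) (dotvC v u).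
set a := dotv u u; set d := dotv u v; set c := dotv v v.
have -> : a - d / c * d + (- (d / c * d) - d / c * - (d / c * c)) = a - d ^+ 2 / c.
  by field.
by rewrite subr_ge0 ler_pdivrMr.
Qed.

Lemma dotv_add_lb (p q : 'cV[R]_n) (t : R) : 0 <= t ->
  dotv q q <= t ^+ 2 * dotv p p -> (1 - 2 * t) * dotv p p <= dotv (p + q) (p + q).
Proof.
move=> t_ge0 q_small.
have cross_sqr : dotv p q ^+ 2 <= (t * dotv p p) ^+ 2.
  apply: (le_trans (dotv_CauchySchwarz p q)).
  by rewrite exprMn expr2 mulrCA ler_wpM2l ?dotv_ge0 // mulrC.
have cross_lb : - (t * dotv p p) <= dotv p q.
  by have := mulr_ge0 t_ge0 (dotv_ge0 p); nra.
rewrite !(dotvDl, dotvDr) (dotvC q p).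
by have := dotv_ge0 q; lra.
Qed.

End InnerProduct.

Section Intervention.
Variables (R : realType) (n : nat).
Implicit Types (v x y d : 'cV[R]_n) (B : 'M[R]_n).

Lemma Mmat_unit (A : 'M[R]_n) (beta : R) :
  (forall m, eigenvalue A m -> beta * m != 1) -> Mmat beta A \in unitmx.
Proof.
move=> no_eig; rewrite -row_free_unit; apply: inj_row_free => v.
rewrite /Mmat mulmxBr mul_mx_scalar scale1r -scalemxAr => /eqP.
rewrite subr_eq0 => /eqP v_fix; apply/eqP/negPn/negP => v_neq0.
have beta_neq0 : beta != 0.
  by apply: contraNneq v_neq0 => beta0; rewrite v_fix beta0 scale0r.
have : eigenvalue A beta^-1.
  apply/eigenvalueP; exists v => //.
  by rewrite {2}v_fix scalerA mulVf ?scale1r.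
by move=> /no_eig; rewrite mulfV ?eqxx.
Qed.

Lemma dotv_unitmx_gt0 B v : B \in unitmx -> v != 0 -> 0 < dotv (B *m v) (B *m v).
Proof.
move=> B_unit v_neq0; rewrite lt_def dotv_ge0 andbT dotv_eq0.
by apply: contraNneq v_neq0 => Bv0; rewrite -(mulKmx B_unit v) Bv0 mulmx0.
Qed.

Lemma welfareE (A : 'M[R]_n) (beta : R) (b x : 'cV[R]_n) :
  welfare beta A b x =
  dotv (invmx (Mmat beta A) *m (b + x)) (invmx (Mmat beta A) *m (b + x)) / 2.
Proof. by rewrite /welfare normv_sqr. Qed.

Lemma sphere_dist_cosine y z (C gamma : R) : 0 < C ->
  dotv y y = C -> dotv z z = C -> gamma < cosine_sim y z ->
  dotv (y - z) (y - z) <= 2 * C * (1 - gamma).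
Proof.
move=> C_gt0 yC zC.
have -> : cosine_sim y z = dotv y z / C.
  by rewrite /cosine_sim /normv yC zC -expr2 sqr_sqrtr // ltW.
rewrite ltr_pdivlMr // !(dotvDl, dotvDr, dotvNl, dotvNr) (dotvC z y) yC zC.
lra.
Qed.

Section OptimalGainBound.
Variables (B : 'M[R]_n) (b : 'cV[R]_n) (C P : R).
Hypothesis C_ge0 : 0 <= C.
Hypothesis optimal :
  forall x, dotv x x = C -> dotv (B *m (b + x)) (B *m (b + x)) <= P.

(* Optimality on the sphere bounds the gain of B in every direction:
   test the point s d of the sphere with s chosen so that <B b, s B d> >= 0. *)
Lemma optimal_gain_bound d : C * dotv (B *m d) (B *m d) <= P * dotv d d.
Proof.
have [/eqP|d_neq0] := eqVneq (dotv d d) 0.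
  by rewrite dotv_eq0 => /eqP->; rewrite mulmx0 dotv0r !mulr0.
have d_gt0 : 0 < dotv d d by rewrite lt_def d_neq0 dotv_ge0.
set bd := dotv (B *m b) (B *m d).
have [s s_sqr s_cross] : exists2 s : R, s ^+ 2 = C / dotv d d & 0 <= s * bd.
  have r_sqr : Num.sqrt (C / dotv d d) ^+ 2 = C / dotv d d.
    by rewrite sqr_sqrtr // divr_ge0 // ltW.
  have r_ge0 := sqrtr_ge0 (C / dotv d d).
  have [bd_ge0|bd_lt0] := leP 0 bd.
    by exists (Num.sqrt (C / dotv d d)); rewrite // mulr_ge0.
  exists (- Num.sqrt (C / dotv d d)); rewrite ?sqrrN //.
  by rewrite mulNr -mulrN mulr_ge0 // ltW ?oppr_gt0.
have sd_on_sphere : dotv (s *: d) (s *: d) = C.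
  by rewrite dotvZl dotvZr mulrA -expr2 s_sqr mulfVK.
have := optimal sd_on_sphere.
rewrite mulmxDr -scalemxAr !(dotvDl, dotvDr, dotvZl, dotvZr) (dotvC (B *m d)) -/bd.
rewrite mulrA -expr2 s_sqr => opt_sd.
have : C / dotv d d * dotv (B *m d) (B *m d) <= P.
  by have := dotv_ge0 (B *m b); lra.
by rewrite mulrAC ler_pdivrMr.
Qed.

End OptimalGainBound.
End Intervention.

Theorem mainTheorem3 (R : realType) (n : nat) (A : 'M[R]_n) (beta l1 : R)
    (b : 'cV[R]_n) (C gamma : R) (ys : 'cV[R]_n) :
  adjacency01 A ->
  0 < beta ->
  is_lambda1 A l1 ->
  beta * l1 < 1 ->
  (forall i, 0 <= b i 0) ->
  Num.max ((normv b) ^+ 2) 1 < C ->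
  optimal_intervention beta A b C ys ->
  -1 <= gamma <= 1 ->
  forall y : 'cV[R]_n,
    (normv y) ^+ 2 = C ->
    gamma < cosine_sim y ys ->
    1 - 4 * Num.sqrt (2 * (1 - gamma)) <= welfare beta A b y / welfare beta A b ys.
Proof.
move=> _ beta_gt0 [_ l1_max] beta_l1 _ C_gt [ysC ys_opt] /andP[_ gamma_le1] y yC cos_gt.
rewrite gt_max normv_sqr in C_gt; case/andP: C_gt => b_lt_C C_gt1.
have C_gt0 : 0 < C := lt_trans ltr01 C_gt1.
rewrite normv_sqr in yC; rewrite normv_sqr in ysC.
set B := invmx (Mmat beta A); set p := B *m (b + ys); set q := B *m (y - ys).
have B_unit : B \in unitmx.
  rewrite unitmx_inv; apply: Mmat_unit => m /l1_max m_le.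
  by rewrite lt_eqF // (le_lt_trans _ beta_l1) // ler_wpM2l // ltW.
have optimal x : dotv x x = C -> dotv (B *m (b + x)) (B *m (b + x)) <= dotv p p.
  by move=> xC; have := ys_opt x; rewrite !welfareE normv_sqr => /(_ xC); lra.
have p_gt0 : 0 < dotv p p.
  apply: lt_le_trans (optimal y yC); apply: dotv_unitmx_gt0 => //.
  by rewrite addr_eq0; apply: contraTneq b_lt_C => ->; rewrite dotvNl dotvNr opprK yC ltxx.
set t := Num.sqrt (2 * (1 - gamma)).
have t_sqr : t ^+ 2 = 2 * (1 - gamma) by rewrite sqr_sqrtr //; lra.
have q_small : dotv q q <= t ^+ 2 * dotv p p.
  have := optimal_gain_bound (ltW C_gt0) optimal (y - ys).
  have := sphere_dist_cosine C_gt0 yC ysC cos_gt.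
  rewrite t_sqr -/q; nra.
rewrite !welfareE -/B -/p.
have -> : b + y = (b + ys) + (y - ys) by rewrite addrACA subrr addr0.
rewrite mulmxDr -/p -/q ler_pdivlMr ?divr_gt0 // mulrA ler_pM2r ?invr_gt0 //.
apply: le_trans (dotv_add_lb (sqrtr_ge0 _) q_small).
by rewrite -/t ler_wpM2r ?dotv_ge0 // lerD2l lerN2 ler_wpM2r ?sqrtr_ge0 ?ler_nat.
Qed.
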